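(* Let $\mathcal{V}=\{V_1,\ldots,V_n\}$ and $\mathbb{I}\in\{\mathbb{Z},\mathbb{Q},\mathbb{R}\}$. For every $e\in\mathcal{C}$, every variable $V\in\mathcal{V}$ and every symbolic environment $S^{\mathcal{C}}\in\mathcal{D}^{\mathcal{C}}$, we have $\gamma^{\mathcal{C}}(S^{\mathcal{C}})\models e\preceq\mathit{subst}(e,V,S^{\mathcal{C}}(V))$.
   Context: Expressions are generated by variables $X\in\mathcal{V}$, interval constants $[a,b]$ ($a\in\mathbb{I}\cup\{-\infty\}$, $b\in\mathbb{I}\cup\{+\infty\}$, $a\leq b$), and $e_1\diamond e_2$ with $\diamond\in\{+,-,\times,/\}$. For an environment $\rho:\mathcal{V}\to\mathbb{I}$: $[\![X]\!](\rho)=\{\rho(X)\}$; $[\![[a,b]]\!](\rho)=\{x\in\mathbb{I}\mid a\leq x\leq b\}$; $[\![e_1\diamond e_2]\!](\rho)=\{x\diamond y\mid x\in[\![e_1]\!](\rho),y\in[\![e_2]\!](\rho)\}$ for $\diamond\in\{+,-,\times\}$; $[\![e_1/e_2]\!](\rho)=\{x/y\mid\ldots,y\neq0\}$ if $\mathbb{I}\neq\mathbb{Z}$ and $\{\mathit{truncate}(x/y)\mid\ldots,y\neq0\}$ (rounding towards zero) if $\mathbb{I}=\mathbb{Z}$. $\mathcal{C}$ is the set of all such expressions together with an extra element $\top^{\mathcal{C}}$, with $[\![\top^{\mathcal{C}}]\!](\rho)=\mathbb{I}$. $\mathit{occ}(e)$ is the set of variables occurring in $e$, with $\mathit{occ}(\top^{\mathcal{C}})=\emptyset$.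 $\mathit{subst}(e,V,f)$ replaces every occurrence of $V$ in $e$ by $f$ (with $\mathit{subst}(\top^{\mathcal{C}},V,f)=\top^{\mathcal{C}}$), and for $f=\top^{\mathcal{C}}$: $\mathit{subst}(e,V,\top^{\mathcal{C}})=e$ if $V\notin\mathit{occ}(e)$ and $=\top^{\mathcal{C}}$ if $V\in\mathit{occ}(e)$. $\mathcal{D}^{\mathcal{C}}$ is the set of maps $S^{\mathcal{C}}:\mathcal{V}\to\mathcal{C}$ with no cyclic dependencies, i.e. there are no pairwise distinct variables $W_1,\ldots,W_m$ with $W_i\in\mathit{occ}(S^{\mathcal{C}}(W_{i+1}))$ for all $i<m$ and $W_m\in\mathit{occ}(S^{\mathcal{C}}(W_1))$. Its concretization is $\gamma^{\mathcal{C}}(S^{\mathcal{C}})=\{\rho:\mathcal{V}\to\mathbb{I}\mid\forall k,\ \rho(V_k)\in[\![S^{\mathcal{C}}(V_k)]\!](\rho)\}$. For a set $R$ of environments, $R\models e_1\preceq e_2$ means $\forall\rho\in R,\ [\![e_1]\!](\rho)\subseteq[\![e_2]\!](\rho)$. *)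

(* carrier is Stdlib's real numbers R; the numeric domain
   I in {Z, Q, R} is represented as a subset of R. *)
From Stdlib Require Import Reals QArith Qreals Bool.
From Stdlib Require Vectors.Fin.
Open Scope R_scope.

Inductive numdom : Type := IZ | IQ | IR.

Definition inI (k : numdom) (x : R) : Prop :=
  match k with
  | IZ => exists z : Z, x = IZR z
  | IQ => exists q : Q, x = Q2R q
  | IR => True
  end.

(* floor via Stdlib's [up] (up x is the integer with x < up x <= x + 1) *)
Definition Rfloor (x : R) : R := IZR (up x) - 1.
Definition Rtrunc (x : R) : R :=
  if Rle_dec 0 x then Rfloor x else - Rfloor (- x).

Inductive binop : Type := OAdd | OSub | OMul | ODiv.

(* Expressions over the variables V_1..V_n (represented by Fin.t n).
   ECst lo hi is the interval constant [lo, hi], with None for -oo / +oo. *)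
Inductive expr (n : nat) : Type :=
  | EVar : Fin.t n -> expr n
  | ECst : option R -> option R -> expr n
  | EBin : binop -> expr n -> expr n -> expr n.
Arguments EVar {n} _.
Arguments ECst {n} _ _.
Arguments EBin {n} _ _ _.

(* The set C: expressions plus top (None). *)
Definition cexpr (n : nat) : Type := option (expr n).

Fixpoint wf_expr {n} (k : numdom) (e : expr n) : Prop :=
  match e with
  | EVar _ => True
  | ECst lo hi =>
      match lo with Some a => inI k a | None => True end /\
      match hi with Some b => inI k b | None => True end /\
      match lo, hi with Some a, Some b => a <= b | _, _ => True end
  | EBin _ e1 e2 => wf_expr k e1 /\ wf_expr k e2
  end.

Definition wf_cexpr {n} (k : numdom) (c : cexpr n) : Prop :=
  match c with Some e => wf_expr k e | None => True end.

Definition apply_op (k : numdom) (o : binop) (x y : R) : R :=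
  match o with
  | OAdd => x + y
  | OSub => x - y
  | OMul => x * y
  | ODiv => match k with IZ => Rtrunc (x / y) | _ => x / y end
  end.

Definition env (n : nat) : Type := Fin.t n -> R.

Definition lower_ok (lo : option R) (x : R) : Prop :=
  match lo with Some a => a <= x | None => True end.
Definition upper_ok (hi : option R) (x : R) : Prop :=
  match hi with Some b => x <= b | None => True end.

Fixpoint sem {n} (k : numdom) (e : expr n) (rho : env n) : R -> Prop :=
  match e with
  | EVar X => fun x => x = rho X
  | ECst lo hi => fun x => inI k x /\ lower_ok lo x /\ upper_ok hi x
  | EBin o e1 e2 => fun z =>
      exists x y, sem k e1 rho x /\ sem k e2 rho y /\
        (o = ODiv -> y <> 0) /\ z = apply_op k o x y
  end.

Definition csem {n} (k : numdom) (c : cexpr n) (rho : env n) : R -> Prop :=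
  match c with Some e => sem k e rho | None => fun x => inI k x end.

Fixpoint occb {n} (e : expr n) (V : Fin.t n) : bool :=
  match e with
  | EVar X => if Fin.eq_dec X V then true else false
  | ECst _ _ => false
  | EBin _ e1 e2 => occb e1 V || occb e2 V
  end.

Definition occ {n} (c : cexpr n) (V : Fin.t n) : Prop :=
  match c with Some e => occb e V = true | None => False end.

Fixpoint subst_expr {n} (e : expr n) (V : Fin.t n) (f : expr n) : expr n :=
  match e with
  | EVar X => if Fin.eq_dec X V then f else EVar X
  | ECst lo hi => ECst lo hi
  | EBin o e1 e2 => EBin o (subst_expr e1 V f) (subst_expr e2 V f)
  end.

Definition subst {n} (c : cexpr n) (V : Fin.t n) (f : cexpr n) : cexpr n :=
  match c with
  | None => None
  | Some e =>
      match f with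
      | Some f' => Some (subst_expr e V f')
      | None => if occb e V then None else Some e
      end
  end.

Definition senv (n : nat) : Type := Fin.t n -> cexpr n.

(* cyclic dependency: pairwise distinct W_1..W_m (m >= 1, here w 0 .. w (m-1))
   with W_i in occ(S(W_{i+1})) for i < m and W_m in occ(S(W_1)) *)
Definition has_cycle {n} (S : senv n) : Prop :=
  exists (m : nat) (w : nat -> Fin.t n),
    (1 <= m)%nat /\
    (forall i j : nat, (i < m)%nat -> (j < m)%nat -> w i = w j -> i = j) /\
    (forall i : nat, (i + 1 < m)%nat -> occ (S (w (i + 1)%nat)) (w i)) /\
    occ (S (w 0%nat)) (w (m - 1)%nat).

Definition in_DC {n} (k : numdom) (S : senv n) : Prop :=
  (forall V, wf_cexpr k (S V)) /\ ~ has_cycle S.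

Definition is_env {n} (k : numdom) (rho : env n) : Prop :=
  forall V, inI k (rho V).

Definition gammaC {n} (k : numdom) (S : senv n) (rho : env n) : Prop :=
  is_env k rho /\ forall V, csem k (S V) rho (rho V).

Definition models_le {n} (k : numdom) (Rset : env n -> Prop) (e1 e2 : cexpr n) : Prop :=
  forall rho, Rset rho -> forall x, csem k e1 rho x -> csem k e2 rho x.

From Stdlib Require Import Reals QArith Qreals.
From Stdlib Require Vectors.Fin.
Open Scope R_scope.

(* Every [rho] in [gammaC k S] satisfies [rho V ∈ [[S V]](rho)], so replacing
   the occurrences of [V] in [e] by [S V] can only enlarge the set of values,
   by induction on [e].  When [S V] is top, the substituted expression is top
   (or [e] itself), and top denotes all of I, which contains every value of
   [e] because the arithmetic operations keep values inside I. *)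

Lemma Rfloor_IZR (x : R) : exists z : Z, Rfloor x = IZR z.
Proof. exists (up x - 1)%Z. unfold Rfloor. now rewrite minus_IZR. Qed.

Lemma Rtrunc_IZR (x : R) : exists z : Z, Rtrunc x = IZR z.
Proof.
  unfold Rtrunc. destruct (Rle_dec 0 x).
  - apply Rfloor_IZR.
  - destruct (Rfloor_IZR (- x)) as [z ->]. exists (- z)%Z. now rewrite opp_IZR.
Qed.

Lemma inI_apply_op (k : numdom) (o : binop) (x y : R) :
  inI k x -> inI k y -> (o = ODiv -> y <> 0) -> inI k (apply_op k o x y).
Proof.
  intros Hx Hy Hdiv. destruct k; simpl in *.
  - destruct Hx as [zx ->], Hy as [zy ->]. destruct o; simpl.
    + exists (zx + zy)%Z. now rewrite plus_IZR.
    + exists (zx - zy)%Z. now rewrite minus_IZR.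
    + exists (zx * zy)%Z. now rewrite mult_IZR.
    + apply Rtrunc_IZR.
  - destruct Hx as [qx ->], Hy as [qy ->]. destruct o; simpl.
    + exists (qx + qy)%Q. now rewrite Q2R_plus.
    + exists (qx - qy)%Q. now rewrite Q2R_minus.
    + exists (qx * qy)%Q. now rewrite Q2R_mult.
    + assert (Hqy : ~ (qy == 0)%Q).
      { intro Hq. apply (Hdiv eq_refl). rewrite <- RMicromega.Q2R_0.
        now apply Qeq_eqR. }
      exists (qx / qy)%Q. now rewrite Q2R_div.
  - exact I.
Qed.

Lemma sem_inI {n} (k : numdom) (e : expr n) (rho : env n) (x : R) :
  is_env k rho -> sem k e rho x -> inI k x.
Proof.
  intros Henv. revert x.
  induction e as [X | lo hi | o e1 IH1 e2 IH2]; simpl; intros x Hx.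
  - subst x. apply Henv.
  - apply Hx.
  - destruct Hx as (a & b & Ha & Hb & Hdiv & ->).
    apply inI_apply_op; auto.
Qed.

Lemma sem_subst_expr {n} (k : numdom) (e f : expr n) (V : Fin.t n)
    (rho : env n) (x : R) :
  sem k f rho (rho V) -> sem k e rho x -> sem k (subst_expr e V f) rho x.
Proof.
  intros Hf. revert x.
  induction e as [X | lo hi | o e1 IH1 e2 IH2]; simpl; intros x Hx.
  - destruct (Fin.eq_dec X V); subst; simpl; auto.
  - exact Hx.
  - destruct Hx as (a & b & Ha & Hb & Hdiv & Hx). exists a, b. auto.
Qed.

Lemma csem_subst {n} (k : numdom) (c f : cexpr n) (V : Fin.t n)
    (rho : env n) (x : R) :
  is_env k rho -> csem k f rho (rho V) -> csem k c rho x ->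
  csem k (subst c V f) rho x.
Proof.
  intros Henv Hf Hx. destruct c as [e |]; simpl in *; [| exact Hx].
  destruct f as [f |]; simpl in *.
  - now apply sem_subst_expr.
  - destruct (occb e V); simpl.
    + now apply (sem_inI k e rho).
    + exact Hx.
Qed.

Theorem theorem5 (k : numdom) (n : nat) (e : cexpr n) (V : Fin.t n) (S : senv n) :
  wf_cexpr k e -> in_DC k S ->
  models_le k (gammaC k S) e (subst e V (S V)).
Proof.
  intros _ _ rho [Henv HS] x Hx.
  exact (csem_subst k e (S V) V rho x Henv (HS V) Hx).
Qed.
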